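(* Let $V$ be a finite connected subset of $\mathbb{Z}^{2}$. Then \[ \ell_{\mathrm{TS}}(V)\le|V|\left(1+8\left(\frac{|\partial V|}{|V|}\right)^{1/3}\right). \]
   Context: $\mathbb{Z}^2$ is considered with its standard Cayley graph with respect to $e_1=(1,0)$, $e_2=(0,1)$; connectedness refers to this graph. For a finite set $V\subseteq\mathbb{Z}^2$, $\ell_{\mathrm{TS}}(V)$ is the length of a shortest path in this graph visiting every point of $V$ (starting and ending points not prescribed). $\partial V$ is the inner boundary: the set of points of $V$ having at least one neighbour outside $V$. *)

(* points of Z^2 as Z*Z, finite sets as duplicate-free lists. *)
From Stdlib Require Import ZArith List Reals ClassicalEpsilon.
Import ListNotations.

Definition pt := (Z * Z)%type.

Definition adj (x y : pt) : Prop :=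
  (Z.abs (fst x - fst y) + Z.abs (snd x - snd y) = 1)%Z.

Definition neighbours (x : pt) : list pt :=
  [ (fst x + 1, snd x)%Z; (fst x - 1, snd x)%Z;
    (fst x, snd x + 1)%Z; (fst x, snd x - 1)%Z ].

Definition pt_eqb (x y : pt) : bool :=
  (Z.eqb (fst x) (fst y) && Z.eqb (snd x) (snd y))%bool.

Definition memb (x : pt) (V : list pt) : bool := existsb (pt_eqb x) V.

Fixpoint is_walk (p : list pt) : Prop :=
  match p with
  | x :: ((y :: _) as q) => adj x y /\ is_walk q
  | _ => True
  end.

Definition walk_length (p : list pt) : nat := length p - 1.

Definition connected (V : list pt) : Prop :=
  forall x y, In x V -> In y V ->
    exists q, is_walk (x :: q) /\ last (x :: q) x = y /\ incl (x :: q) V.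

Definition inner_boundary (V : list pt) : list pt :=
  filter (fun x => existsb (fun y => negb (memb y V)) (neighbours x)) V.

Definition visits (p V : list pt) : Prop := incl V p.

Definition is_ell_TS (V : list pt) (n : nat) : Prop :=
  (exists p, p <> nil /\ is_walk p /\ visits p V /\ walk_length p = n) /\
  (forall p, p <> nil -> is_walk p -> visits p V -> (n <= walk_length p)%nat).

Definition ell_TS (V : list pt) : nat :=
  epsilon (inhabits 0%nat) (is_ell_TS V).

(* Cut Z^2 into blocks of L x 2 points; each block carries a Hamiltonian cycle
   of length 2L.  A walk inside V is grown one new point x at a time, attached by
   an edge to an already visited neighbour of x: if the block of x lies in V, the
   whole block cycle is inserted (2L + 2 edges for 2L new points), otherwise x
   alone (2 edges).  A block meeting V without lying in V contains a point of the
   inner boundary, so at most 2L |dV| points are of the second kind, whence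
   L l_TS(V) <= (L + 1) |V| + 2L (L - 1) |dV|.  Taking L close to
   (|V| / |dV|)^(1/3) / 4 gives the bound. *)

From Stdlib Require Import ZArith List Reals Lia Lra Classical ClassicalEpsilon.
Import ListNotations.

Lemma pt_eqb_eq x y : pt_eqb x y = true <-> x = y.
Proof.
  destruct x as [a b], y as [c d]; unfold pt_eqb; simpl.
  rewrite Bool.andb_true_iff, !Z.eqb_eq.
  split; [intros [-> ->]; reflexivity | intros E; inversion E; auto].
Qed.

Lemma memb_In x V : memb x V = true <-> In x V.
Proof.
  unfold memb; rewrite existsb_exists; split.
  - intros [y [Hy E]]; apply pt_eqb_eq in E; subst; exact Hy.
  - intros Hx; exists x; split; [exact Hx | apply pt_eqb_eq; reflexivity].
Qed.

Lemma membP x V : reflect (In x V) (memb x V).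
Proof. apply Bool.iff_reflect. symmetry. apply memb_In. Qed.

Lemma adj_sym x y : adj x y -> adj y x.
Proof. unfold adj; lia. Qed.

Lemma last_app_cons {A} (l l' : list A) y d : last (l ++ y :: l') d = last (y :: l') d.
Proof. induction l as [|a l IH]; simpl; auto. rewrite IH. destruct l; reflexivity. Qed.

Lemma last_default {A} (x : A) l d d' : last (x :: l) d = last (x :: l) d'.
Proof. revert x; induction l as [|a l IH]; intros x; [reflexivity | apply IH]. Qed.

Lemma last_In {A} (x : A) l d : In (last (x :: l) d) (x :: l).
Proof.
  revert x; induction l as [|a l IH]; intros x; [left; reflexivity|].
  right; apply IH.
Qed.

Lemma walk_app l1 l2 d : l1 <> [] -> l2 <> [] -> is_walk l1 -> is_walk l2 ->
  adj (last l1 d) (hd d l2) -> is_walk (l1 ++ l2).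
Proof.
  induction l1 as [|a [|b l1] IH]; intros H1 H2 W1 W2 E; [congruence| |].
  - destruct l2 as [|c l2]; [congruence|]. split; assumption.
  - destruct W1 as [Hab W1]. split; [exact Hab|]. apply IH; auto; discriminate.
Qed.

Lemma walk_glue l1 l2 d : l1 <> [] -> is_walk l1 -> is_walk (last l1 d :: l2) ->
  is_walk (l1 ++ l2).
Proof.
  induction l1 as [|a [|b l1] IH]; intros H1 W1 W2; [congruence | exact W2 |].
  destruct W1 as [Hab W1]. split; [exact Hab|]. apply IH; auto; discriminate.
Qed.

Lemma walk_app_inv l1 l2 : is_walk (l1 ++ l2) -> is_walk l1 /\ is_walk l2.
Proof.
  induction l1 as [|a [|b l1] IH]; intros W; [split; [exact I | exact W] | |].
  - split; [exact I|]. destruct l2; [exact I | apply W].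
  - destruct W as [Hab W]. apply IH in W as [W1 W2]. split; [split|]; assumption.
Qed.

Lemma walk_app_cons_inv l1 y l2 : is_walk (l1 ++ y :: l2) ->
  is_walk (l1 ++ [y]) /\ is_walk (y :: l2).
Proof.
  intros W. split.
  - replace (l1 ++ y :: l2) with ((l1 ++ [y]) ++ l2) in W
      by (rewrite <- app_assoc; reflexivity).
    exact (proj1 (walk_app_inv _ _ W)).
  - exact (proj2 (walk_app_inv _ _ W)).
Qed.

Lemma closed_walk_rotate c0 C x :
  is_walk (c0 :: C) -> last (c0 :: C) c0 = c0 -> In x (c0 :: C) ->
  exists C', is_walk (x :: C') /\ last (x :: C') x = x /\ length C' = length C /\
    (forall p, In p (x :: C') <-> In p (c0 :: C)).
Proof.
  intros W Hl Hx.
  destruct C as [|a C].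
  { destruct Hx as [<-|[]]. exists []. simpl; intuition. }
  assert (HxC : In x (a :: C)).
  { destruct Hx as [<-|Hx]; [rewrite <- Hl at 1; simpl; apply last_In | exact Hx]. }
  apply in_split in HxC as [D1 [D2 HD]]. rewrite HD in *.
  change (c0 :: D1 ++ x :: D2) with ((c0 :: D1) ++ x :: D2) in W, Hl.
  rewrite last_app_cons in Hl.
  apply walk_app_cons_inv in W as [W1 W2].
  exists (D2 ++ D1 ++ [x]). split; [|split; [|split]].
  - change (x :: D2 ++ D1 ++ [x]) with ((x :: D2) ++ (D1 ++ [x])).
    apply walk_glue with (d := x); [discriminate | exact W2 |].
    rewrite (last_default _ _ x c0), Hl. exact W1.
  - rewrite app_comm_cons, app_assoc. apply last_last.
  - rewrite !length_app. simpl. lia.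
  - assert (Hc0 : In c0 (x :: D2)) by (rewrite <- Hl; apply last_In).
    intros p; simpl in *; rewrite !in_app_iff in *; simpl in *.
    intuition (subst; auto).
Qed.

Lemma splice_closed_walk W y x U :
  is_walk W -> In y W -> adj y x -> is_walk (x :: U) -> last (x :: U) x = x ->
  exists W', is_walk W' /\ length W' = (length W + length U + 2)%nat /\
    (forall p, In p W' <-> In p W \/ In p (x :: U)).
Proof.
  intros HW Hy Hyx HU Hl.
  apply in_split in Hy as [A [B ->]].
  apply walk_app_cons_inv in HW as [W1 W2].
  exists (A ++ y :: x :: U ++ y :: B). split; [|split].
  - replace (A ++ y :: x :: U ++ y :: B) with ((A ++ [y]) ++ (x :: U) ++ y :: B)
      by (rewrite <- app_assoc; reflexivity).
    apply walk_app with (d := x); [destruct A; discriminate | discriminate | exact W1 | |].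
    + apply walk_app with (d := x); [discriminate | discriminate | exact HU | exact W2 |].
      rewrite Hl. apply adj_sym, Hyx.
    + rewrite last_last. exact Hyx.
  - rewrite !length_app. simpl. rewrite length_app. simpl. lia.
  - intros p. rewrite !in_app_iff. simpl. rewrite !in_app_iff. simpl. intuition.
Qed.

Lemma walk_exits W x q : is_walk (x :: q) -> In x W -> ~ In (last (x :: q) x) W ->
  exists y z, In y W /\ ~ In z W /\ adj y z /\ In z (x :: q).
Proof.
  revert x; induction q as [|a q IH]; intros x Hw Hx Hl; [contradiction|].
  destruct Hw as [Hxa Hw].
  destruct (classic (In a W)) as [Ha|Ha].
  - change (last (x :: a :: q) x) with (last (a :: q) x) in Hl.
    rewrite (last_default a q x a) in Hl.
    destruct (IH a Hw Ha Hl) as [y [z [Hy [Hz [Hyz Hzq]]]]].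
    exists y, z. repeat split; auto. right; exact Hzq.
  - exists x, a. repeat split; auto. right; left; reflexivity.
Qed.

Lemma connected_exit_edge V W w z : connected V -> incl W V -> In w W -> In z V -> ~ In z W ->
  exists y x, In y W /\ ~ In x W /\ In x V /\ adj y x.
Proof.
  intros Hc HWV Hw Hz HzW.
  destruct (Hc w z (HWV w Hw) Hz) as [q [Hq [Hqz Hqi]]].
  rewrite <- Hqz in HzW.
  destruct (walk_exits W w q Hq Hw HzW) as [y [x [Hy [Hx [Hyx Hxq]]]]].
  exists y, x. repeat split; auto.
Qed.

Lemma filter_length_mono {A} (f g : A -> bool) l :
  (forall v, g v = true -> f v = true) -> (length (filter g l) <= length (filter f l))%nat.
Proof.
  intros Hgf. induction l as [|a l IH]; simpl; [lia|].
  destruct (g a) eqn:Eg; [rewrite (Hgf a Eg); simpl; lia|]. destruct (f a); simpl; lia.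
Qed.

Lemma filter_length_strict {A} (f g : A -> bool) l x :
  (forall v, g v = true -> f v = true) -> In x l -> f x = true -> g x = false ->
  (length (filter g l) < length (filter f l))%nat.
Proof.
  intros Hgf. induction l as [|a l IH]; intros Hx Hfx Hgx; [destruct Hx|].
  pose proof (filter_length_mono f g l Hgf). simpl.
  destruct Hx as [<-|Hx]; [rewrite Hfx, Hgx; simpl; lia|].
  specialize (IH Hx Hfx Hgx).
  destruct (g a) eqn:Eg; [rewrite (Hgf a Eg); simpl; lia|]. destruct (f a); simpl; lia.
Qed.

Lemma list_sum_map_add {A} (f g : A -> nat) l :
  list_sum (map (fun x => f x + g x)%nat l) = (list_sum (map f l) + list_sum (map g l))%nat.
Proof. induction l as [|a l IH]; simpl; [reflexivity | rewrite IH; lia]. Qed.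

Lemma list_sum_map_le {A} (f g : A -> nat) l : (forall x, In x l -> f x <= g x)%nat ->
  (list_sum (map f l) <= list_sum (map g l))%nat.
Proof.
  induction l as [|a l IH]; intros H; simpl; [lia|].
  specialize (IH (fun x Hx => H x (or_intror Hx))). specialize (H a (or_introl eq_refl)). lia.
Qed.

Lemma list_sum_map_indicator {A} (P : A -> bool) c l :
  list_sum (map (fun x => if P x then c else 0%nat) l) = (c * length (filter P l))%nat.
Proof. induction l as [|a l IH]; simpl; [lia | destruct (P a); simpl; rewrite IH; lia]. Qed.

Lemma list_sum_map_const {A} c (l : list A) : list_sum (map (fun _ => c) l) = (c * length l)%nat.
Proof. induction l as [|a l IH]; simpl; [lia | rewrite IH; lia]. Qed.

Definition block (L : nat) (p : pt) : pt := (fst p / Z.of_nat L, snd p / 2)%Z.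

(* The block with corner (L c.1, 2 c.2), listed along its Hamiltonian cycle:
   forward along the bottom row, then back along the top row. *)
Definition block_point (L : nat) (c : pt) (i : nat) : pt :=
  if (i <? L)%nat then (Z.of_nat L * fst c + Z.of_nat i, 2 * snd c)%Z
  else (Z.of_nat L * fst c + Z.of_nat (2 * L - 1 - i), 2 * snd c + 1)%Z.

Definition block_points (L : nat) (c : pt) : list pt := map (block_point L c) (seq 0 (2 * L)).

Lemma Z_div_affine m q r : (0 <= r < m)%Z -> ((m * q + r) / m = q)%Z.
Proof. intros H. symmetry. apply Z.div_unique with r; lia. Qed.

Lemma block_points_spec L c p : (0 < L)%nat -> In p (block_points L c) <-> block L p = c.
Proof.
  intros HL. unfold block_points, block. rewrite in_map_iff. split.
  - intros [i [<- Hi]]. apply in_seq in Hi. destruct c as [c1 c2].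
    unfold block_point. destruct (Nat.ltb_spec i L); cbn [fst snd];
      (f_equal; [apply Z_div_affine; lia | Z.div_mod_to_equations; lia]).
  - destruct p as [p1 p2]. cbn [fst snd]. intros <-.
    pose proof (Z.div_mod p1 (Z.of_nat L) ltac:(lia)) as E1.
    pose proof (Z.mod_pos_bound p1 (Z.of_nat L) ltac:(lia)) as B1.
    pose proof (Z.div_mod p2 2 ltac:(lia)) as E2.
    pose proof (Z.mod_pos_bound p2 2 ltac:(lia)) as B2.
    set (r := Z.to_nat (p1 mod Z.of_nat L)).
    assert (Hr : Z.of_nat r = (p1 mod Z.of_nat L)%Z) by (unfold r; lia).
    clearbody r.
    destruct (Z.eq_dec (p2 mod 2) 0) as [E|E].
    + exists r. rewrite in_seq. unfold block_point. cbn [fst snd].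
      destruct (Nat.ltb_spec r L); [split; [f_equal|] | ]; lia.
    + exists (2 * L - 1 - r)%nat. rewrite in_seq. unfold block_point. cbn [fst snd].
      destruct (Nat.ltb_spec (2 * L - 1 - r) L); [ | split; [f_equal|] ]; lia.
Qed.

Lemma block_points_length L c : length (block_points L c) = (2 * L)%nat.
Proof. unfold block_points. rewrite length_map, length_seq. reflexivity. Qed.

Lemma block_points_NoDup L c : NoDup (block_points L c).
Proof.
  apply NoDup_map_NoDup_ForallPairs; [|apply seq_NoDup].
  intros i j Hi Hj. apply in_seq in Hi, Hj. unfold block_point.
  destruct (Nat.ltb_spec i L), (Nat.ltb_spec j L); intros E; injection E; lia.
Qed.

Lemma walk_map_seq (f : nat -> pt) a k :
  (forall i, (a <= i)%nat -> (S i < a + k)%nat -> adj (f i) (f (S i))) ->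
  is_walk (map f (seq a k)).
Proof.
  revert a; induction k as [|[|k] IH]; intros a Hf; [exact I | exact I |].
  split; [apply Hf; lia|]. apply (IH (S a)). intros i Hi Hk. apply Hf; lia.
Qed.

Lemma block_cycle L c : (0 < L)%nat ->
  is_walk (block_points L c ++ [block_point L c 0]).
Proof.
  intros HL. unfold block_points.
  replace (2 * L)%nat with (S (2 * L - 1)) by lia.
  apply walk_app with (d := block_point L c 0); [simpl; discriminate | discriminate | | exact I |].
  - apply walk_map_seq. intros i _ Hi. unfold block_point, adj.
    destruct (Nat.ltb_spec i L), (Nat.ltb_spec (S i) L); cbn [fst snd]; lia.
  - rewrite seq_S, map_app. cbn [map]. rewrite last_last. unfold hd, block_point, adj.
    destruct (Nat.ltb_spec (0 + (2 * L - 1)) L), (Nat.ltb_spec 0 L); cbn [fst snd]; lia.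
Qed.

Lemma block_cycle_at L x : (0 < L)%nat ->
  exists U, is_walk (x :: U) /\ last (x :: U) x = x /\ length U = (2 * L)%nat /\
    (forall p, In p (x :: U) <-> block L p = block L x).
Proof.
  intros HL.
  assert (Hc := block_cycle L (block L x) HL).
  destruct (block_points L (block L x)) as [|c0 C] eqn:E.
  { apply (f_equal (@length pt)) in E. rewrite block_points_length in E. simpl in E. lia. }
  assert (Hc0 : c0 = block_point L (block L x) 0).
  { unfold block_points in E. replace (2 * L)%nat with (S (2 * L - 1)) in E by lia.
    injection E as E _. congruence. }
  assert (Hmem : forall p, In p (c0 :: C ++ [c0]) <-> block L p = block L x).
  { intros p. rewrite <- block_points_spec, E by exact HL. simpl.
    rewrite in_app_iff. simpl. intuition (subst; auto). }
  rewrite <- Hc0 in Hc. simpl in Hc.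
  destruct (closed_walk_rotate c0 (C ++ [c0]) x Hc) as [U [HUw [HUl [HUn HUm]]]].
  - rewrite app_comm_cons. apply last_last.
  - apply Hmem. reflexivity.
  - exists U. split; [exact HUw|]. split; [exact HUl|]. split.
    + rewrite HUn, length_app. apply (f_equal (@length pt)) in E.
      rewrite block_points_length in E. simpl in *. lia.
    + intros p. rewrite HUm. apply Hmem.
Qed.

Definition dist1 (x y : pt) : Z := (Z.abs (fst x - fst y) + Z.abs (snd x - snd y))%Z.

Lemma Z_div_between m a c e : (0 < m)%Z -> (a <= c <= e \/ e <= c <= a)%Z ->
  (a / m = e / m)%Z -> (c / m = a / m)%Z.
Proof.
  intros Hm [[H1 H2]|[H1 H2]] He.
  - pose proof (Z.div_le_mono a c m Hm H1). pose proof (Z.div_le_mono c e m Hm H2). lia.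
  - pose proof (Z.div_le_mono e c m Hm H1). pose proof (Z.div_le_mono c a m Hm H2). lia.
Qed.

Lemma block_step_toward L v z : (0 < L)%nat -> v <> z -> block L v = block L z ->
  exists w, In w (neighbours v) /\ block L w = block L v /\ (dist1 w z < dist1 v z)%Z.
Proof.
  intros HL Hvz Hb. destruct v as [v1 v2], z as [z1 z2].
  unfold block, dist1, neighbours in *. cbn [fst snd] in *. injection Hb as Hb1 Hb2.
  assert (HLz : (0 < Z.of_nat L)%Z) by lia.
  destruct (Z.lt_trichotomy v1 z1) as [H1|[<-|H1]];
    [| destruct (Z.lt_trichotomy v2 z2) as [H2|[<-|H2]] |].
  - exists (v1 + 1, v2)%Z. cbn [fst snd]. split; [simpl; auto|].
    split; [f_equal; apply (Z_div_between _ v1 _ z1)|]; lia.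
  - exists (v1, v2 + 1)%Z. cbn [fst snd]. split; [simpl; auto|].
    split; [f_equal; apply (Z_div_between _ v2 _ z2)|]; lia.
  - contradiction.
  - exists (v1, v2 - 1)%Z. cbn [fst snd]. split; [simpl; auto|].
    split; [f_equal; apply (Z_div_between _ v2 _ z2)|]; lia.
  - exists (v1 - 1, v2)%Z. cbn [fst snd]. split; [simpl; auto|].
    split; [f_equal; apply (Z_div_between _ v1 _ z1)|]; lia.
Qed.

Lemma inner_boundary_closed V v w : In v V -> ~ In v (inner_boundary V) ->
  In w (neighbours v) -> In w V.
Proof.
  intros Hv Hvb Hw. apply NNPP. intros HwV. apply Hvb.
  apply filter_In. split; [exact Hv|]. apply existsb_exists. exists w. split; [exact Hw|].
  destruct (membP w V); [contradiction | reflexivity].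
Qed.

Section BlockTours.

Variables (V : list pt) (L : nat).

Definition block_full (c : pt) : bool := forallb (fun p => memb p V) (block_points L c).

(* L times the cost per new point: 2L + 2 edges for the 2L points of a full
   block, 2 edges for a point visited alone. *)
Definition weight (v : pt) : nat := if block_full (block L v) then S L else (2 * L)%nat.

Definition covered_weight (W : list pt) : nat :=
  list_sum (map (fun v => if memb v W then weight v else 0%nat) V).

Definition partial_points : list pt := filter (fun v => negb (block_full (block L v))) V.

Lemma covered_weight_union W W' T :
  (forall p, In p W' <-> In p W \/ In p T) -> (forall p, In p T -> ~ In p W) ->
  covered_weight W' = (covered_weight W + covered_weight T)%nat.
Proof.
  intros HW' Hdisj. unfold covered_weight. rewrite <- list_sum_map_add.
  f_equal. apply map_ext. intros v.
  specialize (HW' v). specialize (Hdisj v).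
  destruct (membP v W), (membP v T), (membP v W'); first [lia | exfalso; tauto].
Qed.

Lemma covered_weight_ge T D c : NoDup D -> incl D V -> incl D T ->
  (forall d, In d D -> weight d = c) -> (c * length D <= covered_weight T)%nat.
Proof.
  intros HD HDV HDT Hc. unfold covered_weight.
  assert (Hlen : (length D <= length (filter (fun v => memb v D) V))%nat).
  { apply NoDup_incl_length; [exact HD|]. intros d Hd.
    apply filter_In. split; [apply HDV, Hd | apply memb_In, Hd]. }
  etransitivity; [|apply list_sum_map_le with (f := fun v => if memb v D then c else 0%nat)].
  - rewrite list_sum_map_indicator. nia.
  - intros v _. destruct (memb v D) eqn:ED; [|lia]. apply memb_In in ED.
    rewrite (proj2 (memb_In v T)) by (apply HDT, ED). rewrite Hc by exact ED. lia.
Qed.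

Lemma covered_weight_le W :
  (covered_weight W <= S L * length V + (L - 1) * length partial_points)%nat.
Proof.
  unfold covered_weight, partial_points.
  rewrite <- list_sum_map_indicator, <- list_sum_map_const, <- list_sum_map_add.
  apply list_sum_map_le. intros v _. unfold weight.
  destruct (memb v W), (block_full (block L v)); simpl; lia.
Qed.

Hypothesis L_pos : (0 < L)%nat.

Lemma block_fullP c : block_full c = true <-> (forall p, block L p = c -> In p V).
Proof.
  unfold block_full. rewrite forallb_forall.
  split; intros H p Hp; apply memb_In, H, block_points_spec; assumption.
Qed.

Lemma local_tour x : In x V ->
  exists U, is_walk (x :: U) /\ last (x :: U) x = x /\ incl (x :: U) V /\
    (forall p, In p (x :: U) ->
       p = x \/ (block_full (block L x) = true /\ block L p = block L x)) /\
    (forall p, In p (x :: U) -> block_full (block L p) = true ->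
       incl (block_points L (block L p)) (x :: U)) /\
    (L * (length U + 2) <= covered_weight (x :: U))%nat.
Proof.
  intros Hx. destruct (block_full (block L x)) eqn:Ef.
  - destruct (block_cycle_at L x L_pos) as [U [HUw [HUl [HUn HUm]]]].
    assert (Hblock : incl (block_points L (block L x)) (x :: U)).
    { intros p Hp. apply HUm, block_points_spec; assumption. }
    exists U. split; [exact HUw|]. split; [exact HUl|]. split; [|split; [|split]].
    + intros p Hp. apply (proj1 (block_fullP _) Ef), HUm, Hp.
    + intros p Hp. right. split; [reflexivity | apply HUm, Hp].
    + intros p Hp _. rewrite (proj1 (HUm p) Hp). exact Hblock.
    + assert (Hw := covered_weight_ge (x :: U) _ (S L) (block_points_NoDup L (block L x))).
      rewrite block_points_length in Hw. rewrite HUn.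
      enough (S L * (2 * L) <= covered_weight (x :: U))%nat by nia.
      apply Hw; [| exact Hblock |].
      * intros p Hp. apply (proj1 (block_fullP _) Ef), block_points_spec; assumption.
      * intros d Hd. unfold weight. rewrite (proj1 (block_points_spec _ _ _ L_pos) Hd), Ef.
        reflexivity.
  - exists []. split; [exact I|]. split; [reflexivity|]. split; [|split; [|split]].
    + intros p [<-|[]]. exact Hx.
    + intros p [<-|[]]. left; reflexivity.
    + intros p [<-|[]]. congruence.
    + assert (Hw := covered_weight_ge [x] [x] (2 * L)
                      (NoDup_cons x (@in_nil _ x) (NoDup_nil _))).
      simpl length in *. enough (2 * L * 1 <= covered_weight [x])%nat by lia.
      apply Hw; [intros p [<-|[]]; exact Hx | apply incl_refl |].
      intros d [<-|[]]. unfold weight. rewrite Ef. reflexivity.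
Qed.

Record good_walk (W : list pt) : Prop := {
  good_walk_nonempty : W <> [];
  good_walk_is_walk : is_walk W;
  good_walk_incl : incl W V;
  (* so that a full block is either entirely visited or not at all *)
  good_walk_full_blocks : forall p, In p W -> block_full (block L p) = true ->
    incl (block_points L (block L p)) W;
  good_walk_length : (L * walk_length W <= covered_weight W)%nat }.

Lemma good_walk_start : V <> [] -> exists W, good_walk W.
Proof.
  intros Hne.
  assert (exists v, In v V) as [v Hv]
    by (destruct V as [|v V']; [congruence | exists v; left; reflexivity]).
  destruct (local_tour v Hv) as [U [HUw [_ [HUV [_ [HUfull HUlen]]]]]].
  exists (v :: U). split; [discriminate | exact HUw | exact HUV | exact HUfull |].
  unfold walk_length. simpl length. nia.
Qed.

Lemma good_walk_extend W y x : good_walk W -> In y W -> adj y x -> In x V -> ~ In x W ->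
  exists W', good_walk W' /\ incl W W' /\ In x W'.
Proof.
  intros HW Hy Hyx Hx HxW.
  destruct (local_tour x Hx) as [U [HUw [HUl [HUV [HUx [HUfull HUlen]]]]]].
  destruct (splice_closed_walk W y x U (good_walk_is_walk _ HW) Hy Hyx HUw HUl)
    as [W' [HW'w [HW'n HW'm]]].
  assert (Hdisj : forall p, In p (x :: U) -> ~ In p W).
  { intros p Hp HpW. destruct (HUx p Hp) as [-> | [Hf Hb]]; [contradiction|].
    apply HxW, (good_walk_full_blocks _ HW p HpW); rewrite Hb; [exact Hf|].
    apply block_points_spec; [exact L_pos | reflexivity]. }
  exists W'. split; [split | split].
  - intros E. rewrite E in HW'n. simpl in HW'n. lia.
  - exact HW'w.
  - intros p Hp.
    apply HW'm in Hp as [Hp|Hp]; [apply (good_walk_incl _ HW) | apply HUV]; exact Hp.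
  - intros p Hp Hf q Hq. apply HW'm.
    apply HW'm in Hp as [Hp|Hp]; [left; apply (good_walk_full_blocks _ HW p Hp Hf) |
      right; apply (HUfull p Hp Hf)]; exact Hq.
  - rewrite (covered_weight_union W W' (x :: U) HW'm Hdisj).
    pose proof (good_walk_length _ HW) as HWlen.
    destruct W as [|w W]; [destruct (good_walk_nonempty _ HW); reflexivity|].
    unfold walk_length in *. rewrite HW'n. simpl length in *. nia.
  - intros p Hp. apply HW'm. left; exact Hp.
  - apply HW'm. right; left; reflexivity.
Qed.

Lemma good_walk_covering : V <> [] -> connected V -> exists W, good_walk W /\ incl V W.
Proof.
  intros Hne Hc. destruct (good_walk_start Hne) as [W0 HW0].
  set (unvisited W := length (filter (fun v => negb (memb v W)) V)).
  revert HW0.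
  induction W0 as [W IH] using (well_founded_induction (well_founded_ltof _ unvisited)).
  intros HW.
  destruct (classic (exists z, In z V /\ ~ In z W)) as [[z [Hz HzW]] | Hall].
  - assert (exists w, In w W) as [w Hw]
      by (destruct W as [|w W'];
          [destruct (good_walk_nonempty _ HW) | exists w; left]; reflexivity).
    destruct (connected_exit_edge V W w z Hc (good_walk_incl _ HW) Hw Hz HzW)
      as [y [x [Hy [HxW [Hx Hyx]]]]].
    destruct (good_walk_extend W y x HW Hy Hyx Hx HxW) as [W1 [HW1 [HWW1 HxW1]]].
    apply (IH W1); [|exact HW1].
    apply filter_length_strict with x; [| exact Hx | |].
    + intros v. destruct (membP v W), (membP v W1); simpl; auto.
    + destruct (membP x W); [contradiction | reflexivity].
    + destruct (membP x W1); [reflexivity | contradiction].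
  - exists W. split; [exact HW|]. intros v Hv. apply NNPP. intros HvW. apply Hall. eauto.
Qed.

Lemma partial_block_meets_boundary v : In v V -> block_full (block L v) = false ->
  exists y, In y (inner_boundary V) /\ block L y = block L v.
Proof.
  intros Hv Hf.
  assert (exists z, block L z = block L v /\ ~ In z V) as [z [Hz HzV]].
  { apply NNPP. intros Hn. assert (block_full (block L v) = true); [|congruence].
    apply block_fullP. intros p Hp. apply NNPP. intros HpV. apply Hn. eauto. }
  rewrite <- Hz.
  (* Step inside the block towards the missing point z; a step can only leave V
     from a point of the inner boundary. *)
  assert (Hgen : forall n u, (dist1 u z <= Z.of_nat n)%Z -> In u V -> block L u = block L z ->
    exists y, In y (inner_boundary V) /\ block L y = block L z).
  { induction n as [|n IH]; intros u Hd Hu Hb;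
      (destruct (classic (In u (inner_boundary V))) as [Hub|Hub]; [exists u; split; assumption|]);
      assert (Huz : u <> z) by (intros ->; contradiction);
      destruct (block_step_toward L u z L_pos Huz Hb) as [w [Hw [Hbw Hdw]]].
    - unfold dist1 in *. lia.
    - apply (IH w); [lia | apply (inner_boundary_closed V u w Hu Hub Hw) | congruence]. }
  apply (Hgen (Z.to_nat (dist1 v z)) v); [unfold dist1; lia | exact Hv | symmetry; exact Hz].
Qed.

Lemma partial_points_length : NoDup V ->
  (length partial_points <= 2 * L * length (inner_boundary V))%nat.
Proof.
  intros HV.
  assert (Hincl : incl partial_points
                    (flat_map (fun y => block_points L (block L y)) (inner_boundary V))).
  { intros v Hv. apply filter_In in Hv as [Hv Hf]. apply Bool.negb_true_iff in Hf.
    destruct (partial_block_meets_boundary v Hv Hf) as [y [Hy Hyv]].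
    apply in_flat_map. exists y. split; [exact Hy|].
    apply block_points_spec; [exact L_pos | symmetry; exact Hyv]. }
  apply NoDup_incl_length in Hincl; [|apply NoDup_filter, HV].
  rewrite (flat_map_constant_length (c := 2 * L)%nat) in Hincl
    by (intros; apply block_points_length).
  lia.
Qed.

End BlockTours.

Lemma block_tour_bound V L : (0 < L)%nat -> NoDup V -> V <> [] -> connected V ->
  exists p, p <> [] /\ is_walk p /\ visits p V /\
    (L * walk_length p <= S L * length V + (L - 1) * (2 * L * length (inner_boundary V)))%nat.
Proof.
  intros HL HV Hne Hc.
  destruct (good_walk_covering V L HL Hne Hc) as [W [HW HVW]].
  exists W. split; [apply (good_walk_nonempty _ _ _ HW)|].
  split; [apply (good_walk_is_walk _ _ _ HW)|]. split; [exact HVW|].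
  pose proof (good_walk_length _ _ _ HW).
  pose proof (covered_weight_le V L W).
  pose proof (partial_points_length V L HL HV).
  nia.
Qed.

Lemma ell_TS_le_walk_length V p : p <> [] -> is_walk p -> visits p V ->
  (ell_TS V <= walk_length p)%nat.
Proof.
  intros Hp Hw Hv.
  set (P n := exists q, q <> [] /\ is_walk q /\ visits q V /\ walk_length q = n).
  destruct (dec_inh_nat_subset_has_unique_least_element P (fun n => classic (P n))
      (ex_intro _ (walk_length p) (ex_intro _ p (conj Hp (conj Hw (conj Hv eq_refl))))))
    as [m [[Hm Hmin] _]].
  assert (Hex : exists n, is_ell_TS V n).
  { exists m. split; [exact Hm|]. intros q Hq Hqw Hqv. apply Hmin. exists q. auto. }
  apply (proj2 (epsilon_spec (inhabits 0%nat) (is_ell_TS V) Hex)); assumption.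
Qed.

Open Scope R_scope.

Lemma ell_TS_block_bound V L : (0 < L)%nat -> NoDup V -> V <> [] -> connected V ->
  INR L * INR (ell_TS V) <=
  (INR L + 1) * INR (length V) + 2 * INR L * (INR L - 1) * INR (length (inner_boundary V)).
Proof.
  intros HL HV Hne Hc.
  destruct (block_tour_bound V L HL HV Hne Hc) as [p [Hp [Hw [Hv Hlen]]]].
  pose proof (ell_TS_le_walk_length V p Hp Hw Hv) as Hell.
  assert (Hnat : (L * ell_TS V <= S L * length V +
                  (L - 1) * (2 * L * length (inner_boundary V)))%nat) by nia.
  apply le_INR in Hnat.
  rewrite plus_INR, !mult_INR, S_INR, minus_INR in Hnat by lia.
  replace (INR 1) with 1 in Hnat by reflexivity.
  replace (INR 2) with 2 in Hnat by (simpl; lra).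
  lra.
Qed.

(* [ln] vanishes off the positive reals, so a zero base gives [exp 0 = 1]. *)
Lemma Rpower_0_l y : Rpower 0 y = 1.
Proof.
  unfold Rpower, ln. destruct (Rlt_dec 0 0) as [H0|_]; [destruct (Rlt_irrefl 0 H0)|].
  rewrite Rmult_0_r. apply exp_0.
Qed.

Lemma Rpower_third_cube x : 0 < x -> Rpower x (1 / 3) ^ 3 = x.
Proof.
  intros Hx. rewrite <- Rpower_pow by apply exp_pos.
  rewrite Rpower_mult. replace (1 / 3 * INR 3) with 1 by (simpl; field).
  apply Rpower_1, Hx.
Qed.

Lemma exists_nat_between r : 0 <= r -> exists L : nat, r < INR L <= r + 1.
Proof.
  intros Hr. destruct (archimed r) as [H1 H2].
  assert (Hup : (0 < up r)%Z) by (apply lt_IZR; lra).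
  exists (Z.to_nat (up r)). rewrite INR_IZR_INZ, Z2Nat.id by lia. lra.
Qed.

Lemma exists_block_width s : 0 < s ->
  exists L : nat, (0 < L)%nat /\ 1 < 4 * s * INR L /\ 4 * s * (INR L - 1) <= 1.
Proof.
  intros Hs.
  destruct (exists_nat_between (/ (4 * s))) as [L [HL1 HL2]];
    [left; apply Rinv_0_lt_compat; lra|].
  assert (Hinv : 4 * s * / (4 * s) = 1) by (field; lra).
  exists L. split; [|split]; [apply INR_lt; simpl | |]; nra.
Qed.

Lemma tour_bound_at_width e n s l : 0 < n -> 0 < s <= 8 -> 0 < l ->
  1 < 4 * s * l -> 4 * s * (l - 1) <= 1 ->
  l * e <= (l + 1) * n + 2 * l * (l - 1) * (s ^ 3 * n) ->
  e <= n * (1 + 8 * s).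
Proof.
  intros Hn Hs Hl Hsl Hsl1 Hbound.
  assert (Hlns : 0 < l * n * s) by (apply Rmult_lt_0_compat; [apply Rmult_lt_0_compat|]; lra).
  assert (Hcubic : 2 * l * (l - 1) * (s ^ 3 * n) <= 4 * s * l * n).
  { replace (2 * l * (l - 1) * (s ^ 3 * n)) with (l * n * s * s * (4 * s * (l - 1)) / 2)
      by field.
    assert (l * n * s * s * (4 * s * (l - 1)) <= l * n * s * s * 1)
      by (apply Rmult_le_compat_l; nra).
    nra. }
  apply Rmult_le_reg_l with l; nra.
Qed.

Lemma bound_from_block_widths (e n b : R) : 0 < n -> 0 <= b ->
  (forall L : nat, (0 < L)%nat ->
     INR L * e <= (INR L + 1) * n + 2 * INR L * (INR L - 1) * b) ->
  e <= n * (1 + 8 * Rpower (b / n) (1 / 3)).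
Proof.
  intros Hn Hb Hbound. set (s := Rpower (b / n) (1 / 3)).
  assert (Hs0 : 0 < s) by apply exp_pos.
  destruct (Rle_lt_dec (1 / 8) s) as [Hs|Hs].
  - specialize (Hbound 1%nat ltac:(lia)). simpl INR in Hbound. nra.
  - assert (Hbpos : 0 < b).
    { destruct Hb as [Hb|<-]; [exact Hb|].
      unfold s in Hs. rewrite Rdiv_0_l, Rpower_0_l in Hs. lra. }
    assert (Hs3 : b = s ^ 3 * n).
    { unfold s. rewrite Rpower_third_cube by (apply Rdiv_lt_0_compat; assumption). field. lra. }
    destruct (exists_block_width s Hs0) as [L [HL [HsL HsL1]]].
    specialize (Hbound L HL). rewrite Hs3 in Hbound.
    apply (tour_bound_at_width e n s (INR L)); try lra. apply lt_0_INR, HL.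
Qed.

Theorem lemma2p1 (V : list pt) :
  NoDup V -> V <> nil -> connected V ->
  INR (ell_TS V) <=
  INR (length V) *
    (1 + 8 * Rpower (INR (length (inner_boundary V)) / INR (length V)) (1 / 3)).
Proof.
  intros HV Hne Hc.
  apply bound_from_block_widths; [| apply pos_INR |].
  - apply lt_0_INR. destruct V; [congruence | simpl; lia].
  - intros L HL. apply ell_TS_block_bound; assumption.
Qed.
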